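(* For every integer $m \geq 1$, let $\mathrm{Cay}(\sigma_m)$ and $\mathrm{Cay}(\tau_m)$ be the Cayley graphs (defined in the context) of the Boolean functions $\sigma_m, \tau_m : \mathbb{Z}_2^{2m} \to \mathbb{Z}_2$. Then $\mathrm{Cay}(\sigma_m)$ and $\mathrm{Cay}(\tau_m)$ are isomorphic (as simple graphs) if and only if $m \in \{1,2,3\}$.
   Context: Identify $\mathbb{Z}_2^{2m}$ with the integers $0,\dots,4^m-1$ via binary representation, so each $i \in \mathbb{Z}_2^{2m}$ has a base-4 representation with $m$ digits (each base-4 digit being a consecutive pair of bits). Define $\sigma_m(i)=1$ if and only if the number of base-4 digits of $i$ equal to $1$ is odd, and $\sigma_m(i)=0$ otherwise. Define $\tau_m(i)=1$ if and only if the number of base-4 digits of $i$ equal to $1$ or $2$ is nonzero and the number of base-4 digits of $i$ equal to $1$ is even, and $\tau_m(i)=0$ otherwise. For $f:\mathbb{Z}_2^{2m}\to\mathbb{Z}_2$ with $f(0)=0$, the Cayley graph $\mathrm{Cay}(f)$ is the simple undirected graph with vertex set $\mathbb{Z}_2^{2m}$ in which distinct $i,j$ are adjacent if and only if $f(i+j)=1$ (addition in $\mathbb{Z}_2^{2m}$). *)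

From mathcomp Require Import all_boot.
Set Implicit Arguments. Unset Strict Implicit. Unset Printing Implicit Defensive.

(* Z_2^{2m}, viewed through base-4 digits: an element is an m-tuple of
   consecutive bit pairs (hi, lo); digit k has value 2*hi + lo. *)
Definition V (m : nat) : finType := {ffun 'I_m -> bool * bool}.

Definition vadd m (x y : V m) : V m :=
  [ffun k => (((x k).1 (+) (y k).1), ((x k).2 (+) (y k).2))].

Definition digit m (x : V m) (k : 'I_m) : nat := 2 * (x k).1 + (x k).2.

Definition ndig m (x : V m) (d : nat) : nat := #|[set k | digit x k == d]|.

Definition sigma m (x : V m) : bool := odd (ndig x 1).

Definition tau m (x : V m) : bool :=
  (#|[set k | (digit x k == 1) || (digit x k == 2)]| != 0) && ~~ odd (ndig x 1).

Definition cay m (f : V m -> bool) : rel (V m) :=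
  fun i j => (i != j) && f (vadd i j).

Definition graph_iso (T : finType) (e1 e2 : rel T) : Prop :=
  exists phi : T -> T, bijective phi /\ forall x y, e2 (phi x) (phi y) = e1 x y.

From mathcomp Require Import all_boot zify.

(* For m >= 4 the two graphs have different clique numbers.  The 2^m vectors
   whose base-4 digits are all 0 or 2 form a clique of Cay(tau_m).  On the other
   side, sigma_m is a quadratic form: sigma (x + y) = sigma x + sigma y + B(x, y)
   for a bilinear form B with B(x, x) = 0.  Translating a clique of Cay(sigma_m)
   so that it contains 0, its other vertices u, v satisfy B(u, v) = 1.  For such
   a family W, B(y, sum of S) = |S| + [y in S] (mod 2) for y in W, so when |W|
   is even the 2^|W| subset sums are distinct and |W| <= 2m; hence cliques of
   Cay(sigma_m) have at most 2m + 2 vertices, fewer than 2^m.  For m <= 3 an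
   explicit isomorphism is checked by computation. *)

Definition dig (p : bool * bool) : nat := 2 * p.1 + p.2.

Definition padd (p p' : bool * bool) : bool * bool := (p.1 (+) p'.1, p.2 (+) p'.2).

Lemma vaddE {m} (x y : V m) k : vadd x y k = padd (x k) (y k).
Proof. by rewrite ffunE. Qed.

Lemma vaddKl {m} (x : V m) : involutive (vadd x).
Proof.
by move=> y; apply/ffunP => k; rewrite !vaddE /padd /= !addKb -surjective_pairing.
Qed.

Lemma vadd_translate {m} (p x y : V m) : vadd (vadd p x) (vadd p y) = vadd x y.
Proof.
by apply/ffunP => k; rewrite !vaddE /padd /= addbACA addbb addbACA addbb.
Qed.

Definition clique {T : finType} (e : rel T) (A : {set T}) : Prop :=
  {in A &, forall x y, x != y -> e x y}.

Lemma clique_iso {T : finType} {e1 e2 : rel T} {A : {set T}} :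
  graph_iso e1 e2 -> clique e2 A -> exists2 B : {set T}, clique e1 B & #|B| = #|A|.
Proof.
case=> phi [[psi phiK psiK] e_phi] cliqueA.
exists (psi @: A); last exact/card_imset/(can_inj psiK).
move=> u v /imsetP[x Ax ->] /imsetP[y Ay ->] ne_psi.
rewrite -e_phi !psiK; apply: cliqueA => //.
by apply: contraNneq ne_psi => ->.
Qed.

Lemma odd_card_set (T : finType) (P : pred T) :
  odd #|[set k | P k]| = \big[addb/false]_k P k.
Proof.
rewrite -sum1_card big_mkcond /=.
rewrite (big_morph odd (id1 := false) (id2 := 0) oddD (erefl _)).
by apply: eq_bigr => k _; rewrite inE; case: (P k).
Qed.

Lemma sigmaE {m} (x : V m) : sigma x = \big[addb/false]_k (dig (x k) == 1).
Proof. exact: odd_card_set. Qed.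

Definition sigma_polar {m} (x y : V m) : bool :=
  \big[addb/false]_k (((x k).1 && (y k).2) (+) ((x k).2 && (y k).1)).

Lemma sigmaD {m} (x y : V m) : sigma (vadd x y) = sigma x (+) sigma y (+) sigma_polar x y.
Proof.
rewrite !sigmaE /sigma_polar -!big_split /=; apply: eq_bigr => k _.
by rewrite vaddE /dig; case: (x k) => [[] []]; case: (y k) => [[] []].
Qed.

Lemma sigma_polarxx {m} (x : V m) : sigma_polar x x = false.
Proof. by rewrite /sigma_polar big1 // => k _; rewrite andbC addbb. Qed.

Definition vsum {m} (S : {set V m}) : V m :=
  [ffun k => (\big[addb/false]_(w in S) (w k).1, \big[addb/false]_(w in S) (w k).2)].

Lemma sigma_polar_vsum {m} (y : V m) S :
  sigma_polar y (vsum S) = \big[addb/false]_(w in S) sigma_polar y w.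
Proof.
rewrite /sigma_polar exchange_big /=; apply: eq_bigr => k _.
by rewrite ffunE /= !big_distrr -big_split.
Qed.

Section PolarFamily.

Context {m : nat} {W : {set V m}}.
Hypothesis W_polar : {in W &, forall u v, u != v -> sigma_polar u v}.

Lemma sigma_polar_vsum_family {y} {S : {set V m}} :
  y \in W -> S \subset W -> sigma_polar y (vsum S) = odd #|S| (+) (y \in S).
Proof.
move=> Wy sSW; rewrite sigma_polar_vsum.
rewrite (eq_bigr (fun w => w != y)); last first.
  move=> w Sw; case: eqP => [->|/eqP ne_wy]; first by rewrite sigma_polarxx.
  by rewrite W_polar // ?(subsetP sSW) // eq_sym.
have -> : \big[addb/false]_(w in S) (w != y) = odd #|[set w | (w \in S) && (w != y)]|.
  by rewrite odd_card_set big_mkcond.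
rewrite (cardsD1 y S) oddD (_ : [set w | _] = S :\ y).
  by case: (y \in S) => /=; case: (odd _).
by apply/setP => w; rewrite !inE andbC.
Qed.

Lemma vsum_inj_family : ~~ odd #|W| -> {in powerset W &, injective vsum}.
Proof.
move=> evenW S1 S2; rewrite !powersetE => sS1W sS2W eq_sum.
have parity y : y \in W -> (y \in S1) (+) (y \in S2) = odd #|S1| (+) odd #|S2|.
  move=> Wy; have := sigma_polar_vsum_family Wy sS1W.
  rewrite eq_sum (sigma_polar_vsum_family Wy sS2W).
  by case: (y \in S1); case: (y \in S2); case: (odd #|S1|); case: (odd #|S2|).
have notin_sub (S : {set V m}) y : S \subset W -> y \in W = false -> y \in S = false.
  by move=> /subsetP sSW; apply: contraFF; apply: sSW.
case: (boolP (odd #|S1| (+) odd #|S2|)) => [odd_diff | same_parity].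
  have defS2 : S2 = W :\: S1.
    apply/setP => y; rewrite inE; case Wy: (y \in W).
      by move: (parity y Wy); rewrite odd_diff andbT; case: (y \in S1); case: (y \in S2).
    by rewrite andbF (notin_sub _ _ sS2W Wy).
  move: odd_diff; rewrite defS2 cardsD (setIidPr sS1W) oddB ?subset_leq_card //.
  by rewrite (negbTE evenW) /= addbb.
apply/setP => y; case Wy: (y \in W); last by rewrite !(notin_sub _ _ _ Wy).
move: (parity y Wy); rewrite (negbTE same_parity).
by case: (y \in S1); case: (y \in S2).
Qed.

Lemma card_polar_family_even : ~~ odd #|W| -> #|W| <= 2 * m.
Proof.
move=> evenW; rewrite -(@leq_exp2l 2) // -card_powerset.
rewrite -(card_in_imset (vsum_inj_family evenW)).
apply: leq_trans (max_card _) _.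
by rewrite card_ffun card_prod card_bool card_ord expnM.
Qed.

End PolarFamily.

Lemma card_polar_family {m} (W : {set V m}) :
  {in W &, forall u v, u != v -> sigma_polar u v} -> #|W| <= 2 * m + 1.
Proof.
move=> W_polar; case: (boolP (odd #|W|)) => [oddW | evenW]; last first.
  by rewrite (leq_trans (card_polar_family_even W_polar evenW)) ?leq_addr.
have [w Ww] : exists w, w \in W by apply/set0Pn; rewrite -card_gt0 odd_gt0.
move: oddW; rewrite (cardsD1 w W) Ww add1n /= addn1 ltnS => evenW'.
apply: card_polar_family_even evenW' => u v /setD1P[_ Wu] /setD1P[_ Wv].
exact: W_polar.
Qed.

Lemma card_sigma_clique {m} {A : {set V m}} :
  clique (cay (@sigma m)) A -> #|A| <= 2 * m + 2.
Proof.
move=> cliqueA; have [-> | [p Ap]] := set_0Vmem A; first by rewrite cards0.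
have sigma_edge a b : a \in A -> b \in A -> a != b -> sigma (vadd a b).
  by move=> Aa Ab ne_ab; case/andP: (cliqueA a b Aa Ab ne_ab).
pose W := vadd p @: (A :\ p).
have cardW : #|W| = #|A :\ p| by apply/card_imset/(inv_inj (vaddKl p)).
suff : #|W| <= 2 * m + 1 by rewrite (cardsD1 p A) Ap cardW; lia.
apply: card_polar_family => u v /imsetP[a /setD1P[ne_ap Aa] ->].
move=> /imsetP[b /setD1P[ne_bp Ab] ->] ne_pab.
have ne_ab : a != b by apply: contraNneq ne_pab => ->.
have := sigmaD (vadd p a) (vadd p b).
by rewrite vadd_translate !sigma_edge // eq_sym.
Qed.

Definition even_digits {m} (b : {ffun 'I_m -> bool}) : V m := [ffun k => (b k, false)].

Lemma even_digits_inj {m} : injective (@even_digits m).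
Proof.
move=> a b eq_ab; apply/ffunP => k.
by have := congr1 (fun x : V m => (x k).1) eq_ab; rewrite /= !ffunE.
Qed.

Lemma tau_vadd_even_digits {m} (a b : {ffun 'I_m -> bool}) :
  tau (vadd (even_digits a) (even_digits b)) = (a != b).
Proof.
set x := vadd _ _.
have digitE k : digit x k = 2 * (a k (+) b k) by rewrite /digit !ffunE addn0.
rewrite /tau /ndig.
have -> : [set k | digit x k == 1] = set0.
  by apply/setP => k; rewrite !inE digitE; case: (_ (+) _).
have -> : [set k | (digit x k == 1) || (digit x k == 2)] = [set k | a k != b k].
  by apply/setP => k; rewrite !inE digitE; case: (a k); case: (b k).
rewrite cards0 andbT cards_eq0; congr (~~ _).
apply/eqP/eqP => [/setP empty | ->]; last by apply/setP => k; rewrite !inE eqxx.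
by apply/ffunP => k; have := empty k; rewrite !inE => /negbFE/eqP.
Qed.

Lemma tau_clique m : exists2 A : {set V m}, clique (cay (@tau m)) A & #|A| = 2 ^ m.
Proof.
exists (even_digits @: setT).
  move=> x y /imsetP[a _ ->] /imsetP[b _ ->] ne_ab.
  by rewrite /cay ne_ab tau_vadd_even_digits; apply: contraNneq ne_ab => ->.
by rewrite card_imset ?cardsT ?card_ffun ?card_bool ?card_ord //; exact: even_digits_inj.
Qed.

Lemma linear_lt_exp2 m : 4 <= m -> 2 * m + 2 < 2 ^ m.
Proof.
elim: m => // m IHm; rewrite leq_eqVlt => /orP[/eqP <- // | /IHm].
by rewrite expnS; lia.
Qed.

Lemma card_set_count (T : finType) (P : pred T) : #|[set k | P k]| = count P (enum T).
Proof. by rewrite enumT cardsE cardE /enum_mem size_filter. Qed.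

Definition toseq {m} (x : V m) : seq (bool * bool) := [seq x k | k <- enum 'I_m].

Definition ofseq {m} (s : seq (bool * bool)) : V m :=
  [ffun k : 'I_m => nth (false, false) s k].

Lemma size_toseq {m} (x : V m) : size (toseq x) = m.
Proof. by rewrite size_map size_enum_ord. Qed.

Lemma toseqK {m} : cancel (@toseq m) ofseq.
Proof.
by move=> x; apply/ffunP => k; rewrite ffunE (nth_map k) ?size_enum_ord // nth_ord_enum.
Qed.

Lemma ofseqK {m} s : size s = m -> toseq (@ofseq m s) = s.
Proof.
move=> size_s; apply: (@eq_from_nth _ (false, false)) => [|i]; rewrite size_toseq //.
move=> lt_i_m; rewrite (nth_map (Ordinal lt_i_m)) ?size_enum_ord //.
by rewrite ffunE (nth_ord_enum _ (Ordinal lt_i_m)).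
Qed.

Definition xorS (s t : seq (bool * bool)) := [seq padd p.1 p.2 | p <- zip s t].

Lemma toseq_vadd {m} (x y : V m) : toseq (vadd x y) = xorS (toseq x) (toseq y).
Proof.
rewrite /toseq /xorS; elim: (enum 'I_m) => //= k e ->.
by rewrite vaddE.
Qed.

Lemma card_digit {m} (x : V m) (P : pred nat) :
  #|[set k | P (digit x k)]| = count (fun p => P (dig p)) (toseq x).
Proof. by rewrite /toseq count_map card_set_count. Qed.

Definition sigS (s : seq (bool * bool)) : bool := odd (count (fun p => dig p == 1) s).

Definition tauS (s : seq (bool * bool)) : bool :=
  (count (fun p => (dig p == 1) || (dig p == 2)) s != 0) && ~~ sigS s.

Lemma sigma_toseq {m} (x : V m) : sigma x = sigS (toseq x).
Proof. by rewrite /sigma /ndig (card_digit x (pred1 1)). Qed.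

Lemma tau_toseq {m} (x : V m) : tau x = tauS (toseq x).
Proof.
rewrite /tau /ndig (card_digit x (pred1 1)).
by rewrite (card_digit x (fun n => (n == 1) || (n == 2))).
Qed.

Definition digit_pairs : seq (bool * bool) :=
  [:: (false, false); (false, true); (true, false); (true, true)].

Fixpoint tuples n : seq (seq (bool * bool)) :=
  if n is n'.+1 then [seq p :: s | p <- digit_pairs, s <- tuples n'] else [:: [::]].

Lemma mem_tuples s : s \in tuples (size s).
Proof.
elim: s => [//|p s IHs]; apply: (allpairs_f cons) IHs.
by case: p => [[] []].
Qed.

Section TupleMap.

Context {m : nat} {f : seq (bool * bool) -> seq (bool * bool)}.

Hypothesis size_f : forall s, size (f s) = m.
Hypothesis f_involutive : all (fun s => f (f s) == s) (tuples m).
Hypothesis f_cay :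
  all (fun s => all (fun t => tauS (xorS (f s) (f t)) == sigS (xorS s t)) (tuples m))
      (tuples m).

Definition vmap (x : V m) : V m := ofseq (f (toseq x)).

Lemma toseq_in_tuples (x : V m) : toseq x \in tuples m.
Proof. by rewrite -{2}(size_toseq x) mem_tuples. Qed.

Lemma toseq_vmap x : toseq (vmap x) = f (toseq x).
Proof. exact: ofseqK. Qed.

Lemma vmapK : involutive vmap.
Proof.
move=> x; rewrite /vmap toseq_vmap.
by move/allP/(_ _ (toseq_in_tuples x))/eqP: f_involutive => ->; rewrite toseqK.
Qed.

Lemma cay_iso_of_tuple_map : graph_iso (cay (@sigma m)) (cay (@tau m)).
Proof.
exists vmap; split=> [|x y]; first exact: inv_bij vmapK.
rewrite /cay (inj_eq (inv_inj vmapK)) tau_toseq sigma_toseq !toseq_vadd !toseq_vmap.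
move/allP/(_ _ (toseq_in_tuples x))/allP/(_ _ (toseq_in_tuples y))/eqP: f_cay.
by move->.
Qed.

End TupleMap.

(* A table lists the images of 0, ..., 4^m - 1, where base-4 digit k of an
   integer (least significant first) is coordinate k of the vector. *)
Definition encode (s : seq (bool * bool)) : nat := foldr (fun p n => dig p + 4 * n) 0 s.

Fixpoint decode m n : seq (bool * bool) :=
  if m is m'.+1 then (odd n./2, odd n) :: decode m' (n %/ 4) else [::].

Lemma size_decode m n : size (decode m n) = m.
Proof. by elim: m n => //= m IHm n; rewrite IHm. Qed.

Definition table_map m (table : seq nat) s := decode m (nth 0 table (encode s)).

Lemma size_table_map m table s : size (table_map m table s) = m.
Proof. exact: size_decode. Qed.

Lemma cay_iso1 : graph_iso (cay (@sigma 1)) (cay (@tau 1)).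
Proof.
by apply: (cay_iso_of_tuple_map (size_table_map 1 [:: 0; 2; 1; 3])); vm_compute.
Qed.

Lemma cay_iso2 : graph_iso (cay (@sigma 2)) (cay (@tau 2)).
Proof.
apply: (cay_iso_of_tuple_map
  (size_table_map 2 [:: 0; 2; 1; 3; 11; 9; 10; 8; 7; 5; 6; 4; 12; 14; 13; 15]));
  by vm_compute.
Qed.

(* No linear map can work for m = 3: tau_3 has algebraic degree 3, while sigma_3
   is quadratic. *)
Lemma cay_iso3 : graph_iso (cay (@sigma 3)) (cay (@tau 3)).
Proof.
apply: (cay_iso_of_tuple_map (size_table_map 3
  [:: 0; 2; 1; 3; 11; 57; 58; 8; 7; 53; 54; 4; 12; 14; 13; 15;
      47; 33; 34; 44; 39; 25; 26; 36; 43; 21; 22; 40; 35; 45; 46; 32;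
      31; 17; 18; 28; 23; 41; 42; 20; 27; 37; 38; 24; 19; 29; 30; 16;
      48; 50; 49; 51; 59; 9; 10; 56; 55; 5; 6; 52; 60; 62; 61; 63]));
  by vm_compute.
Qed.

Theorem theorem1 (m : nat) (hm : 1 <= m) :
  graph_iso (cay (@sigma m)) (cay (@tau m)) <-> m \in [:: 1; 2; 3].
Proof.
split=> [iso | ]; last first.
  rewrite !inE => /or3P[] /eqP->;
  [exact: cay_iso1 | exact: cay_iso2 | exact: cay_iso3].
have [A cliqueA cardA] := tau_clique m.
have [B cliqueB cardB] := clique_iso iso cliqueA.
have := card_sigma_clique cliqueB; rewrite cardB cardA.
case: (leqP 4 m) => [/linear_lt_exp2 lt_2m | m_lt4 _]; first by rewrite leqNgt lt_2m.
by rewrite !inE; lia.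
Qed.
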